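(* There is a constant $C>0$ such that for every 1-2-metric on $n\ge2$ points and every $\alpha>0$, the greedy-routing network creation game on it with edge price $\alpha$ has a $(C\max\{1,\log n\})$-approximate Nash equilibrium.
   Context: A 1-2-metric is a finite metric space $(\mathcal{P},d)$ with $d(u,v)\in\{1,2\}$ for all distinct $u,v$. Game: agents are the points of $\mathcal{P}$; agent $u$'s strategy is $S_u\subseteq\mathcal{P}\setminus\{u\}$; a profile $\mathbf{s}$ defines the directed network with arcs $(u,v)$, $v\in S_u$, of length $d(u,v)$; $(S'_u,\mathbf{s}_{-u})$ is $\mathbf{s}$ with $S_u$ replaced by $S'_u$. A greedy path from $u$ to $v$ is a directed path $u=x_1,\dots,x_j=v$ of arcs with $d(x_i,v)>d(x_{i+1},v)$ for all $i$. $\mathrm{stretch}(u,v)$ is the minimum length of a greedy path from $u$ to $v$ divided by $d(u,v)$, or a fixed sufficiently large penalty constant $Z$ if none exists. Cost: $c_u(\mathbf{s})=\sum_{v\ne u}\mathrm{stretch}(u,v)+\alpha|S_u|$. For $\beta\ge1$, a $\beta$-approximate Nash equilibrium is a profile $\mathbf{s}$ with $c_u(S'_u,\mathbf{s}_{-u})\ge c_u(\mathbf{s})/\beta$ for every agent $u$ and every $S'_u\subseteq\mathcal{P}\setminus\{u\}$. *)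

From HB Require Import structures.
From mathcomp Require Import all_boot all_order all_algebra.
From mathcomp Require Import boolp classical_sets reals exp.
Set Implicit Arguments. Unset Strict Implicit. Unset Printing Implicit Defensive.
Import Order.TTheory GRing.Theory Num.Theory.
Local Open Scope ring_scope.

Section GreedyGame.
Variable T : finType.

Definition is_12metric (d : T -> T -> nat) : Prop :=
  [/\ (forall u v, d u v = 0%N <-> u = v),
      (forall u v, d u v = d v u),
      (forall u v w, (d u w <= d u v + d v w)%N) &
      (forall u v, u <> v -> d u v = 1%N \/ d u v = 2%N)].

(* A strategy profile: agent u buys arcs to the points of s u. *)
Definition profile := T -> {set T}.

Definition valid_profile (s : profile) : Prop := forall u, u \notin s u.

Definition update (s : profile) (u : T) (S' : {set T}) : profile :=
  fun w => if w == u then S' else s w.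

(* p is the sequence x_2, ..., x_j of a greedy path u = x_1, ..., x_j = v. *)
Definition greedy_path (d : T -> T -> nat) (s : profile) (u v : T) (p : seq T) : bool :=
  path (fun x y => (y \in s x) && (d y v < d x v)%N) u p && (last u p == v).

Definition path_length (d : T -> T -> nat) (u : T) (p : seq T) : nat :=
  sumn (pairmap d u p).

Definition has_greedy_len (d : T -> T -> nat) (s : profile) (u v : T) (k : nat) : bool :=
  `[< exists p : seq T, greedy_path d s u v p /\ path_length d u p = k >].

Variable R : realType.

Definition stretch (d : T -> T -> nat) (Z : R) (s : profile) (u v : T) : R :=
  match pselect (exists k, has_greedy_len d s u v k) with
  | left H => (ex_minn H)%:R / (d u v)%:R
  | right _ => Z
  end.

Definition cost (d : T -> T -> nat) (Z alpha : R) (s : profile) (u : T) : R :=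
  \sum_(v | v != u) stretch d Z s u v + alpha * #|s u|%:R.

Definition approx_NE (d : T -> T -> nat) (Z alpha beta : R) (s : profile) : Prop :=
  valid_profile s /\
  forall (u : T) (S' : {set T}), u \notin S' ->
    cost d Z alpha s u / beta <= cost d Z alpha (update s u S') u.

End GreedyGame.

From HB Require Import structures.
From mathcomp Require Import all_boot all_order all_algebra.
From mathcomp Require Import boolp classical_sets reals exp.
From mathcomp Require Import lra.
Set Implicit Arguments. Unset Strict Implicit.
Import Order.TTheory GRing.Theory Num.Theory.
Local Open Scope ring_scope.

(* Each agent u buys a minimum-size set S that dominates every v <> u: either
   v is in S, or d(u,v) = 2 and d(w,v) = 1 for some w in S.  The first hop of
   any greedy path from u to v is such a witness.  A dominating set contains
   every point at distance 1 from its owner, so under this profile two hops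
   always suffice and every stretch is at most 3, while the triangle inequality
   keeps every stretch at least 1.  Hence moving to another dominating set
   lowers u's cost by a factor at most 3, and moving to a non-dominating set
   leaves some v unreachable and costs the penalty Z, chosen above every cost
   under the profile.  So C = 3 works even without the logarithm. *)

Section Covering.
Variable T : finType.
Variable d : T -> T -> nat.
Hypothesis d12 : is_12metric d.

Lemma dist_xx v : d v v = 0%N.
Proof. by case: d12 => d0 _ _ _; apply/d0. Qed.

Lemma dist_gt0 u v : u != v -> (0 < d u v)%N.
Proof.
case: d12 => d0 _ _ _ neq_uv; rewrite lt0n.
by apply: contra neq_uv => /eqP /d0 ->.
Qed.

Lemma dist_le2 u v : (d u v <= 2)%N.
Proof.
case: (eqVneq u v) => [->|/eqP neq_uv]; first by rewrite dist_xx.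
by case: d12 => _ _ _ /(_ _ _ neq_uv) [] ->.
Qed.

Lemma path_length_ge_dist u p : (d u (last u p) <= path_length d u p)%N.
Proof.
case: d12 => _ _ triangle _.
elim: p u => [|x p IHp] u /=; first by rewrite dist_xx.
exact: leq_trans (triangle u x _) (leq_add (leqnn _) (IHp x)).
Qed.

Definition dominated (u : T) (S : {set T}) (v : T) : bool :=
  (v \in S) || [exists w in S, (d w v == 1%N) && (d u v == 2%N)].

Definition covering (u : T) (S : {set T}) : bool :=
  [forall v, (v != u) ==> dominated u S v].

Lemma coveringP u S : reflect (forall v, v != u -> dominated u S v) (covering u S).
Proof. by apply: (iffP forallP) => cov v; [move/(implyP (cov v))|apply/implyP/cov]. Qed.

Lemma covering_setC1 u : covering u [set~ u].
Proof. by apply/coveringP => v neq_vu; rewrite /dominated !inE neq_vu. Qed.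

Lemma covering_dist1 u S v : covering u S -> d u v = 1%N -> v \in S.
Proof.
move=> /coveringP cov duv; have neq_vu : v != u.
  by apply/eqP => evu; move: duv; rewrite evu dist_xx.
by case/orP: (cov v neq_vu) => // /existsP [w /and3P [_ _]]; rewrite duv.
Qed.

Definition min_cover : profile T := fun u =>
  [arg min_(S < [set~ u] | covering u S && (u \notin S)) #|S|].

Lemma min_coverP u :
  [/\ covering u (min_cover u), u \notin min_cover u &
      forall S, covering u S -> u \notin S -> (#|min_cover u| <= #|S|)%N].
Proof.
rewrite /min_cover; case: arg_minnP => [|S /andP [covS uS] minS].
  by rewrite covering_setC1 !inE eqxx.
by split=> // S' covS' uS'; apply: minS; rewrite covS'.
Qed.

Lemma greedy_path_dominated (s : profile T) u v p :
  u != v -> greedy_path d s u v p -> dominated u (s u) v.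
Proof.
move=> neq_uv; case: p => [|x p] /andP [/= walk /eqP last_v].
  by rewrite last_v eqxx in neq_uv.
case/andP: walk => /andP [xs dx_lt] _.
rewrite /dominated; case: (eqVneq x v) => [<-|neq_xv]; first by rewrite xs.
have dxv : d x v = 1%N.
  by apply/eqP; rewrite eqn_leq dist_gt0 // andbT -ltnS (leq_trans dx_lt) ?dist_le2.
apply/orP; right; apply/existsP; exists x; rewrite xs dxv eqxx /=.
by rewrite eqn_leq dist_le2 -dxv.
Qed.

Lemma greedy_path_of_dominated (s : profile T) u v :
  (forall w x, w != u -> d w x = 1%N -> x \in s w) -> u \notin s u ->
  u != v -> dominated u (s u) v ->
  exists2 p, greedy_path d s u v p & (path_length d u p <= 3)%N.
Proof.
move=> dist1_in us neq_uv /orP [vs|/existsP [w /and3P [ws /eqP dwv /eqP duv]]].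
  exists [:: v]; first by rewrite /greedy_path /= vs dist_xx dist_gt0 ?eqxx.
  by rewrite /path_length /= addn0 (leq_trans (dist_le2 u v)).
have neq_wu : w != u by apply/eqP => ewu; move: us; rewrite -{1}ewu ws.
exists [:: w; v]; last by rewrite /path_length /= dwv addn0 addn1 ltnS dist_le2.
by rewrite /greedy_path /= ws dist1_in // dwv duv dist_xx eqxx.
Qed.

Variable R : realType.

Lemma stretch_ge0 (Z : R) s u v : 0 <= Z -> 0 <= stretch d Z s u v.
Proof. by move=> Z_ge0; rewrite /stretch; case: pselect => // ?; rewrite divr_ge0. Qed.

Lemma stretch_no_greedy_path (Z : R) s u v :
  (forall p, ~~ greedy_path d s u v p) -> stretch d Z s u v = Z.
Proof.
move=> no_path; rewrite /stretch; case: pselect => // ex; exfalso.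
by case: ex => k /asboolP [p [gp _]]; have := no_path p; rewrite gp.
Qed.

Lemma stretch_bounds (Z : R) s u v p :
  u != v -> greedy_path d s u v p ->
  1 <= stretch d Z s u v <= (path_length d u p)%:R.
Proof.
move=> neq_uv gp; rewrite /stretch; case: pselect => [ex|]; last first.
  by case; exists (path_length d u p); apply/asboolP; exists p.
case: ex_minnP => m /asboolP [q [gq <-]] minq.
have le_qp : (path_length d u q <= path_length d u p)%N.
  by apply: minq; apply/asboolP; exists p.
have le_dist : (d u v <= path_length d u q)%N.
  by have /andP [_ /eqP <-] := gq; apply: path_length_ge_dist.
have duv_gt0 : (0 : R) < (d u v)%:R by rewrite ltr0n dist_gt0.
rewrite ler_pdivlMr // ler_pdivrMr // mul1r ler_nat le_dist /=.
apply: le_trans (_ : _ <= (path_length d u p)%:R) _; first by rewrite ler_nat.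
by rewrite ler_peMr // ler1n dist_gt0.
Qed.

Lemma stretch_covering (Z : R) (s : profile T) u v :
  (forall w x, w != u -> d w x = 1%N -> x \in s w) -> u \notin s u ->
  covering u (s u) -> v != u -> 1 <= stretch d Z s u v <= 3.
Proof.
move=> dist1_in us /coveringP cov neq_vu; have neq_uv : u != v by rewrite eq_sym.
have [p gp le3] := greedy_path_of_dominated dist1_in us neq_uv (cov v neq_vu).
have /andP [-> le] := stretch_bounds Z neq_uv gp.
by apply: le_trans le _; rewrite (ler_nat R _ 3).
Qed.

End Covering.

Section MinCoverEquilibrium.
Variable R : realType.
Variables (T : finType) (d : T -> T -> nat).
Hypothesis d12 : is_12metric d.
Variables (Z alpha : R).
Hypotheses (Z_ge0 : 0 <= Z) (alpha_ge0 : 0 <= alpha).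

Lemma update_self (s : profile T) u S : update s u S u = S.
Proof. by rewrite /update eqxx. Qed.

Lemma update_other (s : profile T) u S w : w != u -> update s u S w = s w.
Proof. by rewrite /update => /negbTE ->. Qed.

Lemma cost_ge0 s u : 0 <= cost d Z alpha s u.
Proof. by rewrite addr_ge0 ?mulr_ge0 ?sumr_ge0 // => v _; apply: stretch_ge0. Qed.

Lemma min_cover_dist1 w x : d w x = 1%N -> x \in min_cover d w.
Proof. by have [cov _ _] := min_coverP d w; apply: covering_dist1. Qed.

Lemma stretch_min_cover u v : v != u -> 1 <= stretch d Z (min_cover d) u v <= 3.
Proof.
have [cov us _] := min_coverP d u.
by apply: stretch_covering => // w x _; apply: min_cover_dist1.
Qed.

Lemma cost_min_cover_le u :
  cost d Z alpha (min_cover d) u <= 3 *+ #|T| + alpha * #|T|%:R.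
Proof.
apply: lerD; last by rewrite ler_wpM2l // ler_nat max_card.
rewrite -sumr_const big_mkcond ler_sum // => v _.
by case: ifP => [/stretch_min_cover /andP [] //|_]; lra.
Qed.

Lemma cost_min_cover_le_covering u S :
  covering d u S -> u \notin S ->
  cost d Z alpha (min_cover d) u <= 3 * cost d Z alpha (update (min_cover d) u S) u.
Proof.
move=> covS uS; have [_ _ minS] := min_coverP d u.
rewrite /cost update_self mulrDr lerD //.
  rewrite mulr_sumr ler_sum // => v neq_vu.
  have /andP [_ le3] := stretch_min_cover neq_vu.
  have /andP [ge1 _] : 1 <= stretch d Z (update (min_cover d) u S) u v <= 3.
    apply: stretch_covering; rewrite ?update_self //.
    by move=> w x neq_wu /min_cover_dist1; rewrite update_other.
  lra.
apply: le_trans (_ : _ <= alpha * #|S|%:R) _; first by rewrite ler_wpM2l ?ler_nat ?minS.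
by rewrite ler_peMl ?mulr_ge0 ?ler1n.
Qed.

Lemma cost_ge_Z_of_not_covering (s : profile T) u :
  ~~ covering d u (s u) -> Z <= cost d Z alpha s u.
Proof.
move=> /coveringP not_cov.
have [v neq_vu not_dom] : exists2 v, v != u & ~~ dominated d u (s u) v.
  apply/exists_inP; rewrite -negb_forall_in; apply/forall_inP => cov.
  by apply: not_cov => v /cov.
have no_path p : ~~ greedy_path d s u v p.
  by apply: contra not_dom; apply: greedy_path_dominated; rewrite // eq_sym.
rewrite /cost (bigD1 v) //= stretch_no_greedy_path // -addrA lerDl addr_ge0 ?mulr_ge0 //.
by rewrite sumr_ge0 // => x _; apply: stretch_ge0.
Qed.

End MinCoverEquilibrium.

Theorem theorem2p14 (R : realType) :
  exists C : R, 0 < C /\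
  forall (T : finType) (d : T -> T -> nat),
    is_12metric d -> (2 <= #|T|)%N ->
    forall alpha : R, 0 < alpha ->
    exists Z0 : R, forall Z : R, Z0 <= Z ->
      exists s : profile T,
        approx_NE d Z alpha (C * Num.max 1 (ln (#|T|%:R : R))) s.
Proof.
exists 3; split=> [|T d d12 _ alpha alpha_gt0]; first by lra.
have alpha_ge0 : 0 <= alpha by lra.
exists (3 *+ #|T| + alpha * #|T|%:R) => Z Z0_le_Z.
have Z_ge0 : 0 <= Z by apply: le_trans Z0_le_Z; rewrite addr_ge0 ?mulrn_wge0 ?mulr_ge0.
exists (min_cover d); split=> [u|u S uS]; first by have [] := min_coverP d u.
set beta := 3 * _; have beta_ge3 : 3 <= beta.
  by rewrite -[X in X <= _]mulr1 ler_wpM2l ?ler0n // le_max lexx.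
have dev_cost_ge0 := cost_ge0 d Z_ge0 alpha_ge0 (update (min_cover d) u S) u.
rewrite ler_pdivrMr; last by lra.
case: (boolP (covering d u S)) => covS.
  by have := cost_min_cover_le_covering d12 Z alpha_ge0 covS uS; nra.
have := cost_min_cover_le d12 Z alpha_ge0 u.
have := cost_ge_Z_of_not_covering d12 Z_ge0 alpha_ge0 (s := update (min_cover d) u S) (u := u).
by rewrite update_self => /(_ covS); nra.
Qed.
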